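(* Let $X$ be the Brady complex of $B_4$, let $R$ be a lozenge of $X$ and let $A$ be a vertex of $R$ at which the internal angle of $R$ is $2\pi/3$. Then there are exactly two lozenges $R_1,R_2$ of $X$ such that $R\cap R_1=R\cap R_2=\{A\}$ and such that each of $R\cup R_1$ and $R\cup R_2$ is contained in a flat hexagon of $X$.
   Context: Let $B_4=\langle a,b,c,d,e,f\mid ba=ae=eb,\ de=ec=cd,\ bc=cf=fb,\ df=fa=ad,\ ca=ac,\ ef=fe\rangle$ and $x=bac$. There are exactly sixteen factorizations $x=a_1a_2a_3$ with $a_i\in\{a,\dots,f\}$ (the cyclic length-3 subwords of $bcadefbacdfe$ and $faecfaecfaec$). Brady's complex $V$ has one vertex and one Euclidean tetrahedron per factorization, with edges $v_{i-1}v_i$ labelled $a_i$ (length 1), $v_0v_2,v_1v_3$ labelled $a_1a_2,a_2a_3$ (length $\sqrt2$), $v_0v_3$ labelled $x$ (length $\sqrt3$), glued along equally labelled edges; its universal cover $Y$ is CAT(0) and splits isometrically as $X\times\mathbb{R}$, the $\mathbb{R}$-factor being the direction of the central element $z=x^4$. The Brady complex $X$ is a 2-dimensional CAT(0) simplicial complex with Euclidean equilateral triangle faces; each vertex link is isomorphic to the graph obtained from the incidence graph of the Fano plane by deleting two adjacent vertices, with edge length $\pi/3$. A lozenge of $X$ is the union of two faces glued along an edge contained in exactly two faces; a flat hexagon is a subset isometric to a regular Euclidean hexagon made of faces. *)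

From Stdlib Require Import List Arith.
Import ListNotations.

Inductive gen := ga | gb | gc | gd | ge | gf.

(* Words in the free group: (true, l) = l, (false, l) = l^-1. *)
Definition word := list (bool * gen).
Definition w1 (l : gen) : word := [(true, l)].
Definition w2 (l m : gen) : word := [(true, l); (true, m)].

Definition relations : list (word * word) :=
  [ (w2 gb ga, w2 ga ge); (w2 ga ge, w2 ge gb);
    (w2 gd ge, w2 ge gc); (w2 ge gc, w2 gc gd);
    (w2 gb gc, w2 gc gf); (w2 gc gf, w2 gf gb);
    (w2 gd gf, w2 gf ga); (w2 gf ga, w2 ga gd);
    (w2 gc ga, w2 ga gc);
    (w2 ge gf, w2 gf ge) ].

Inductive geq : word -> word -> Prop :=
| geq_refl u : geq u u
| geq_sym u v : geq u v -> geq v u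
| geq_trans u v w : geq u v -> geq v w -> geq u w
| geq_ctx s t u v : geq u v -> geq (s ++ u ++ t) (s ++ v ++ t)
| geq_cancel1 l : geq [(true, l); (false, l)] []
| geq_cancel2 l : geq [(false, l); (true, l)] []
| geq_rel u v : In (u, v) relations -> geq u v.

Definition xword : word := [(true, gb); (true, ga); (true, gc)].
Fixpoint xpow (n : nat) : word :=
  match n with 0 => [] | S k => xword ++ xpow k end.

(* Vertices of X are the left cosets g<x> of B_4 (the projection of the
   vertex g of Y along the R-direction of z = x^4); two words represent
   the same vertex iff u = v x^k in B_4 for some integer k. *)
Definition veq (u v : word) : Prop :=
  exists n, geq (u ++ xpow n) v \/ geq u (v ++ xpow n).

(* The sixteen factorizations x = a1 a2 a3: the cyclic length-3 subwords
   of bcadefbacdfe and of faecfaecfaec. *)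
Definition factorizations : list (gen * gen * gen) :=
  [ (gb,gc,ga); (gc,ga,gd); (ga,gd,ge); (gd,ge,gf); (ge,gf,gb); (gf,gb,ga);
    (gb,ga,gc); (ga,gc,gd); (gc,gd,gf); (gd,gf,ge); (gf,ge,gb); (ge,gb,gc);
    (gf,ga,ge); (ga,ge,gc); (ge,gc,gf); (gc,gf,ga) ].

(* A face of X: projection of the tetrahedron of Y based at g with the
   factorization (a1,a2,a3); its vertices are g<x>, g a1<x>, g a1 a2<x>. *)
Definition face := (word * (gen * gen * gen))%type.
Definition is_face (F : face) : Prop := In (snd F) factorizations.

Definition fv0 (F : face) : word := fst F.
Definition fv1 (F : face) : word :=
  let '(_, (a1, _, _)) := F in fst F ++ w1 a1.
Definition fv2 (F : face) : word :=
  let '(_, (a1, a2, _)) := F in fst F ++ w2 a1 a2.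

Definition in_face (v : word) (F : face) : Prop :=
  veq v (fv0 F) \/ veq v (fv1 F) \/ veq v (fv2 F).

Definition feq (F G : face) : Prop := forall v, in_face v F <-> in_face v G.

Definition lozenge := (face * face)%type.

Definition is_lozenge (L : lozenge) : Prop :=
  is_face (fst L) /\ is_face (snd L) /\ ~ feq (fst L) (snd L) /\
  exists p q, ~ veq p q /\
    in_face p (fst L) /\ in_face q (fst L) /\
    in_face p (snd L) /\ in_face q (snd L) /\
    (forall G, is_face G -> in_face p G -> in_face q G ->
               feq G (fst L) \/ feq G (snd L)).

Definition leq (L M : lozenge) : Prop :=
  (feq (fst L) (fst M) /\ feq (snd L) (snd M)) \/
  (feq (fst L) (snd M) /\ feq (snd L) (fst M)).

Definition in_loz (v : word) (L : lozenge) : Prop :=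
  in_face v (fst L) \/ in_face v (snd L).

(* The internal angle of the lozenge L at its vertex A is 2pi/3 iff A lies
   in both faces of L (i.e. A is an endpoint of the gluing edge). *)
Definition wide_vertex (L : lozenge) (A : word) : Prop :=
  in_face A (fst L) /\ in_face A (snd L).

(* L ∩ M = {A} (intersection of closed subcomplexes = common vertices). *)
Definition meet_exactly (L M : lozenge) (A : word) : Prop :=
  in_loz A L /\ in_loz A M /\
  forall v, in_loz v L -> in_loz v M -> veq v A.

Definition hexagon := (word * (nat -> word))%type.

Definition hex_face (H : hexagon) (i : nat) (G : face) : Prop :=
  forall w, in_face w G <->
    (veq w (fst H) \/ veq w (snd H i) \/ veq w (snd H ((i + 1) mod 6))).

Definition is_flat_hexagon (H : hexagon) : Prop :=
  (forall i, i < 6 -> ~ veq (snd H i) (fst H)) /\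
  (forall i j, i < j -> j < 6 -> ~ veq (snd H i) (snd H j)) /\
  (forall i, i < 6 -> exists G, is_face G /\ hex_face H i G).

Definition face_in_hex (G : face) (H : hexagon) : Prop :=
  exists i, i < 6 /\ hex_face H i G.

Definition loz_in_hex (L : lozenge) (H : hexagon) : Prop :=
  face_in_hex (fst L) H /\ face_in_hex (snd L) H.

Definition hex_partner (R : lozenge) (A : word) (R1 : lozenge) : Prop :=
  meet_exactly R R1 A /\
  exists H, is_flat_hexagon H /\ loz_in_hex R H /\ loz_in_hex R1 H.

From Stdlib Require Import List Arith Lia Setoid Morphisms ZArith Bool.
Import ListNotations.

(* Conjugation by x permutes the generators (x a = xconj(a) x, with xconj of
   order 4), so the star of every vertex A of X is a translate of one finite
   configuration: sixteen triangles on A and twelve neighbours A l<x>, which are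
   pairwise distinct since the degree and the image in S_4 separate them.
   Wide-angled lozenges at A, their mutual intersections and the flat hexagons
   centred at A can then all be read off this star, and an enumeration of its
   hexagonal 6-cycles shows that each such lozenge has exactly two partners. *)

(** * Words and cosets of [<x>] *)

#[local] Instance geq_equivalence : Equivalence geq.
Proof. split; [exact geq_refl | exact geq_sym | exact geq_trans]. Qed.

#[local] Instance app_geq_proper : Proper (geq ==> geq ==> geq) (@app (bool * gen)).
Proof.
  intros u u' Hu v v' Hv. transitivity (u' ++ v).
  - exact (geq_ctx [] v u u' Hu).
  - pose proof (geq_ctx u' [] v v' Hv) as H. rewrite !app_nil_r in H. exact H.
Qed.

Definition letter_inv (p : bool * gen) : bool * gen := (negb (fst p), snd p).
Definition word_inv (w : word) : word := rev (map letter_inv w).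

Lemma letter_mulV p : geq [p; letter_inv p] [] /\ geq [letter_inv p; p] [].
Proof. destruct p as [[|] l]; split; first [apply geq_cancel1 | apply geq_cancel2]. Qed.

Lemma word_mulV w : geq (w ++ word_inv w) [].
Proof.
  induction w as [|p w IH]; [reflexivity|]. unfold word_inv in *; cbn.
  replace (p :: w ++ rev (map letter_inv w) ++ [letter_inv p])
    with ([p] ++ (w ++ rev (map letter_inv w)) ++ [letter_inv p])
    by (cbn; rewrite !app_assoc; reflexivity).
  rewrite IH. apply letter_mulV.
Qed.

Lemma word_mulVl w : geq (word_inv w ++ w) [].
Proof.
  induction w as [|p w IH]; [reflexivity|]. unfold word_inv in *; cbn.
  replace ((rev (map letter_inv w) ++ [letter_inv p]) ++ p :: w)
    with (rev (map letter_inv w) ++ [letter_inv p; p] ++ w)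
    by (rewrite <- !app_assoc; reflexivity).
  rewrite (proj2 (letter_mulV p)). exact IH.
Qed.

Lemma geq_cancel_r u v t : geq (u ++ t) (v ++ t) -> geq u v.
Proof.
  intro H. assert (H' : geq (u ++ t ++ word_inv t) (v ++ t ++ word_inv t))
    by (rewrite !app_assoc, H; reflexivity).
  rewrite !word_mulV, !app_nil_r in H'. exact H'.
Qed.

Lemma geq_cancel_l u v t : geq (t ++ u) (t ++ v) -> geq u v.
Proof.
  intro H. assert (H' : geq ((word_inv t ++ t) ++ u) ((word_inv t ++ t) ++ v))
    by (rewrite <- !app_assoc, H; reflexivity).
  rewrite !word_mulVl in H'. exact H'.
Qed.

Lemma xpow_add n m : xpow (n + m) = xpow n ++ xpow m.
Proof. induction n as [|n IH]; cbn; [|rewrite IH]; reflexivity. Qed.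

Lemma veq_geq u v : geq u v -> veq u v.
Proof. intro H. exists 0. left. cbn. rewrite app_nil_r. exact H. Qed.

Lemma veq_trans u v w : veq u v -> veq v w -> veq u w.
Proof.
  intros [n [H1|H1]] [m [H2|H2]].
  - exists (n + m). left. rewrite xpow_add, app_assoc, H1. exact H2.
  - assert (E : geq (u ++ xpow n) (w ++ xpow m)) by (rewrite H1; exact H2).
    destruct (le_ge_dec m n).
    + exists (n - m). left. apply (geq_cancel_r _ _ (xpow m)).
      rewrite <- app_assoc, <- xpow_add. replace (n - m + m) with n by lia. exact E.
    + exists (m - n). right. apply (geq_cancel_r _ _ (xpow n)).
      rewrite <- app_assoc, <- xpow_add. replace (m - n + n) with m by lia. exact E.
  - destruct (le_ge_dec n m).
    + exists (m - n). left. rewrite H1, <- app_assoc, <- xpow_add.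
      replace (n + (m - n)) with m by lia. exact H2.
    + exists (n - m). right. rewrite H1, <- H2, <- app_assoc, <- xpow_add.
      replace (m + (n - m)) with n by lia. reflexivity.
  - exists (m + n). right. rewrite H1, H2, <- app_assoc, <- xpow_add. reflexivity.
Qed.

#[local] Instance veq_equivalence : Equivalence veq.
Proof.
  split.
  - intro u. apply veq_geq. reflexivity.
  - intros u v [n [H|H]]; exists n; [right|left]; symmetry; exact H.
  - exact veq_trans.
Qed.

Lemma veq_app_l s u v : veq u v -> veq (s ++ u) (s ++ v).
Proof. intros [n [H|H]]; exists n; [left|right]; rewrite <- ?app_assoc, H; reflexivity. Qed.

Lemma veq_cancel_l s u v : veq (s ++ u) (s ++ v) -> veq u v.
Proof.
  intros [n [H|H]]; exists n; [left|right]; apply (geq_cancel_l _ _ s);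
    rewrite ?app_assoc in *; exact H.
Qed.

(** * Certified equalities between positive words *)

Definition pos (w : list gen) : word := map (pair true) w.

Lemma pos_app u v : pos (u ++ v) = pos u ++ pos v.
Proof. apply map_app. Qed.

Definition gen_eq_dec (x y : gen) : {x = y} + {x <> y}.
Proof. decide equality. Defined.

Definition gens_eqb (u v : list gen) : bool :=
  if list_eq_dec gen_eq_dec u v then true else false.

Lemma gens_eqb_eq u v : gens_eqb u v = true -> u = v.
Proof. unfold gens_eqb. destruct (list_eq_dec gen_eq_dec u v); congruence. Qed.

Lemma positive_relations :
  forallb (fun r => forallb fst (fst r) && forallb fst (snd r)) relations = true.
Proof. vm_cast_no_check (eq_refl true). Qed.

Definition rules : list (list gen * list gen) :=
  flat_map (fun r => [(map snd (fst r), map snd (snd r)); (map snd (snd r), map snd (fst r))])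
    relations.

Lemma pos_map_snd (u : word) : forallb fst u = true -> pos (map snd u) = u.
Proof.
  unfold pos. induction u as [|[[|] l] u IH]; cbn; [reflexivity | |discriminate].
  intro H. rewrite IH; trivial.
Qed.

Lemma rules_sound u v : In (u, v) rules -> geq (pos u) (pos v).
Proof.
  unfold rules. rewrite in_flat_map. intros [[u0 v0] [Hr Huv]].
  pose proof (proj1 (forallb_forall _ _) positive_relations _ Hr) as P.
  apply andb_true_iff in P as [Pu Pv]. cbn in Huv.
  destruct Huv as [E|[E|[]]]; injection E as <- <-;
    rewrite !pos_map_snd by assumption; [|symmetry]; apply geq_rel, Hr.
Qed.

Definition rewrites_of (l : list gen) : list (list gen) :=
  map snd (filter (fun r => gens_eqb (fst r) l) rules).

Fixpoint one_step (w : list gen) : list (list gen) :=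
  match w with
  | a :: (b :: t) as t' =>
      map (fun r => r ++ t) (rewrites_of [a; b]) ++ map (cons a) (one_step t')
  | _ => []
  end.

Lemma one_step_sound w v : In v (one_step w) -> geq (pos w) (pos v).
Proof.
  induction w as [|a [|b t] IH] in v |- *; cbn -[rewrites_of]; try contradiction.
  rewrite in_app_iff, !in_map_iff. intros [[r [<- Hr]]|[v' [<- Hv']]].
  - unfold rewrites_of in Hr. apply in_map_iff in Hr as [[l r'] [E Hr]].
    apply filter_In in Hr as [Hr Hl]. apply gens_eqb_eq in Hl. cbn in E, Hl. subst.
    rewrite pos_app. apply rules_sound in Hr. cbn in Hr |- *.
    exact (geq_ctx [] (pos t) _ _ Hr).
  - apply IH in Hv'. change (geq ([(true, a)] ++ pos (b :: t)) ([(true, a)] ++ pos v')).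
    rewrite Hv'. reflexivity.
Qed.

Fixpoint reachable (k : nat) (S : list (list gen)) : list (list gen) :=
  match k with
  | 0 => S
  | S k' => reachable k' (nodup (list_eq_dec gen_eq_dec) (S ++ flat_map one_step S))
  end.

Lemma reachable_sound u k S : (forall w, In w S -> geq (pos u) (pos w)) ->
  forall w, In w (reachable k S) -> geq (pos u) (pos w).
Proof.
  induction k as [|k IH] in S |- *; cbn; intros HS; [exact HS|].
  apply IH. intros w Hw. apply nodup_In, in_app_or in Hw as [Hw|Hw]; [auto|].
  apply in_flat_map in Hw as [w' [Hw' Hw]].
  rewrite (HS w' Hw'). apply one_step_sound, Hw.
Qed.

(* Twelve rewriting rounds suffice for every positive identity needed below. *)
Definition pos_eqb (u v : list gen) : bool := existsb (gens_eqb v) (reachable 12 [u]).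

Lemma pos_eqb_sound u v : pos_eqb u v = true -> geq (pos u) (pos v).
Proof.
  unfold pos_eqb. intros [w [Hw E]]%existsb_exists. apply gens_eqb_eq in E as ->.
  apply (reachable_sound u 12 [u]); [intros w0 [<-|[]]; reflexivity | exact Hw].
Qed.

Definition xgens : list gen := [gb; ga; gc].
Fixpoint xgens_pow (n : nat) : list gen :=
  match n with 0 => [] | S k => xgens ++ xgens_pow k end.

Lemma pos_xgens_pow n : pos (xgens_pow n) = xpow n.
Proof.
  induction n as [|n IH]; [reflexivity|]. cbn [xgens_pow xpow]. rewrite pos_app, IH. reflexivity.
Qed.

(* The relations preserve length, so an identity u x^n = v between positive
   words forces length u + 3 n = length v. *)
Definition coset_eqb (u v : list gen) : bool :=
  existsb (fun n =>
      (if length u + 3 * n =? length v then pos_eqb (u ++ xgens_pow n) v else false)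
   || (if length v + 3 * n =? length u then pos_eqb u (v ++ xgens_pow n) else false))
    [0; 1; 2].

Lemma coset_eqb_sound u v : coset_eqb u v = true -> veq (pos u) (pos v).
Proof.
  unfold coset_eqb. intros [n [_ H]]%existsb_exists. exists n.
  apply orb_true_iff in H as [H|H]; [left|right];
    destruct (_ =? _) in H; try discriminate;
    apply pos_eqb_sound in H; rewrite pos_app, pos_xgens_pow in H; exact H.
Qed.

Lemma veq_pos s u v : coset_eqb u v = true -> veq (s ++ pos u) (s ++ pos v).
Proof. intro H. apply veq_app_l, coset_eqb_sound, H. Qed.

Definition xconj (a : gen) : gen :=
  match a with ga => ge | gb => gd | gc => gf | gd => gb | ge => gc | gf => ga end.

Lemma x_conj_gen a : geq (xword ++ pos [a]) (pos [xconj a] ++ xword).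
Proof.
  change xword with (pos xgens). rewrite <- !pos_app. apply pos_eqb_sound.
  destruct a; vm_compute; reflexivity.
Qed.

Lemma x_conj_word w : geq (xword ++ pos w) (pos (map xconj w) ++ xword).
Proof.
  induction w as [|a w IH]; [unfold pos; cbn [map app]; rewrite app_nil_r; reflexivity|].
  change (geq (xword ++ pos [a] ++ pos w) (pos [xconj a] ++ pos (map xconj w) ++ xword)).
  rewrite app_assoc, x_conj_gen, <- app_assoc, IH. reflexivity.
Qed.

Definition xconj_pow (n : nat) (v : list gen) : list gen := map (Nat.iter n xconj) v.

Lemma xpow_conj n v : geq (xpow n ++ pos v) (pos (xconj_pow n v) ++ xpow n).
Proof.
  induction n as [|n IH] in v |- *.
  - unfold xconj_pow. cbn [xpow Nat.iter app]. rewrite map_id, app_nil_r. reflexivity.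
  - cbn [xpow]. rewrite <- app_assoc, IH, app_assoc, x_conj_word, <- app_assoc.
    unfold xconj_pow. rewrite map_map. reflexivity.
Qed.

Lemma xconj_iter4 q a : Nat.iter (4 * q) xconj a = a.
Proof.
  induction q as [|q IH]; [reflexivity|].
  replace (4 * S q) with (4 + 4 * q) by lia. rewrite Nat.iter_add, IH. destruct a; reflexivity.
Qed.

Lemma xconj_pow_mod n v : xconj_pow n v = xconj_pow (n mod 4) v.
Proof.
  unfold xconj_pow. apply map_ext. intro a.
  transitivity (Nat.iter (n mod 4 + 4 * (n / 4)) xconj a).
  - f_equal. pose proof (Nat.div_mod_eq n 4). lia.
  - rewrite Nat.iter_add, xconj_iter4. reflexivity.
Qed.

(* V x^k = u or V = u x^k; move x^k across v using x a = xconj(a) x. *)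
Lemma veq_translate V u : veq V u ->
  exists r, r < 4 /\ forall v, veq (V ++ pos (xconj_pow r v)) (u ++ pos v).
Proof.
  intro H. enough (exists r, forall v, veq (V ++ pos (xconj_pow r v)) (u ++ pos v))
    as [r Hr] by (exists (r mod 4); split; [apply Nat.mod_upper_bound; lia|];
                  intro v; rewrite <- xconj_pow_mod; apply Hr).
  destruct H as [n [H|H]].
  - exists n. intro v. exists n. left.
    rewrite <- H, <- !app_assoc, xpow_conj. reflexivity.
  - exists (3 * n). intro v. exists n. right.
    rewrite H, <- !app_assoc, xpow_conj. unfold xconj_pow. rewrite map_map.
    erewrite map_ext with (g := fun a => a); [rewrite map_id; reflexivity|].
    intro a. rewrite <- Nat.iter_add. replace (n + 3 * n) with (4 * n) by lia.
    apply xconj_iter4.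
Qed.

(** * Separating the neighbours of a vertex *)

(* Two invariants of B_4: the degree (image in Z) and the image in S_4 under
   the usual map to the symmetric group, letting each generator act as a
   transposition of four positions. *)
Definition perm4 := (nat * nat * nat * nat)%type.

Definition transpose (l : gen) (s : perm4) : perm4 :=
  let '(x0, x1, x2, x3) := s in
  match l with
  | ga => (x1, x0, x2, x3)
  | gb => (x2, x1, x0, x3)
  | gc => (x0, x1, x3, x2)
  | gd => (x0, x3, x2, x1)
  | ge => (x0, x2, x1, x3)
  | gf => (x3, x1, x2, x0)
  end.

Fixpoint perm_of (w : word) (s : perm4) : perm4 :=
  match w with [] => s | p :: w' => perm_of w' (transpose (snd p) s) end.

Fixpoint degree (w : word) : Z :=
  match w with [] => 0%Z | p :: w' => ((if fst p then 1 else -1) + degree w')%Z end.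

Lemma perm_of_app u v s : perm_of (u ++ v) s = perm_of v (perm_of u s).
Proof. induction u in s |- *; cbn; auto. Qed.

Lemma degree_app u v : degree (u ++ v) = (degree u + degree v)%Z.
Proof. induction u as [|p u IH]; cbn; [|rewrite IH]; lia. Qed.

Lemma geq_invariants u v : geq u v -> degree u = degree v /\ forall s, perm_of u s = perm_of v s.
Proof.
  induction 1 as [| |u v w _ [IH1 IH2] _ [IH3 IH4]|s t u v _ [IH1 IH2]| | |u v H].
  all: try (split; [cbn; lia | intros [[[x0 x1] x2] x3]; destruct l; reflexivity]).
  - split; reflexivity.
  - firstorder.
  - split; [congruence | intro s; rewrite IH2; apply IH4].
  - split; [rewrite !degree_app, IH1; reflexivity | intro s0; rewrite !perm_of_app, IH2; reflexivity].
  - unfold relations in H. cbn in H.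
    repeat (destruct H as [H|H];
      [injection H as <- <-; split; [reflexivity | intros [[[x0 x1] x2] x3]; reflexivity]|]).
    contradiction.
Qed.

Lemma degree_pos u : degree (pos u) = Z.of_nat (length u).
Proof.
  induction u as [|a u IH]; [reflexivity|].
  change (degree (pos (a :: u))) with (1 + degree (pos u))%Z.
  rewrite IH. cbn [length]. lia.
Qed.

Lemma degree_xpow n : degree (xpow n) = (3 * Z.of_nat n)%Z.
Proof.
  induction n as [|n IH]; [reflexivity|].
  cbn [xpow]. rewrite degree_app, IH, Nat2Z.inj_succ. change (degree xword) with 3%Z. lia.
Qed.

Definition perm_id : perm4 := (0, 1, 2, 3).

Lemma veq_short u v : veq (pos u) (pos v) -> length u <= 2 -> length v <= 2 ->
  length u = length v /\ perm_of (pos u) perm_id = perm_of (pos v) perm_id.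
Proof.
  intros [n [H|H]] Hu Hv; apply geq_invariants in H as [H1 H2];
    rewrite ?degree_app, !degree_pos, ?degree_xpow in H1;
    (assert (n = 0) as -> by lia); cbn [xpow] in H2; rewrite app_nil_r in H2;
    rewrite H2; split; auto; lia.
Qed.

(* The twelve neighbours of a vertex A of X are the vertices A l<x>, l a
   prefix of length one or two of a factorization of x; index 0 is A itself. *)
Definition link_words : list (list gen) :=
  [[]; [ga]; [gb]; [gc]; [gd]; [ge]; [gf]; [gb;ga]; [gd;ge]; [gb;gc]; [gd;gf]; [gc;ga]; [ge;gf]].

Definition link_word (k : nat) : list gen := nth k link_words [].

Definition nbr (A : word) (k : nat) : word := A ++ pos (link_word k).

Lemma link_word_length k : length (link_word k) <= 2.
Proof. unfold link_word. do 13 (destruct k as [|k]; [cbn; lia|]). destruct k; cbn; lia. Qed.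

Lemma forallb_seq f n k : forallb f (seq 0 n) = true -> k < n -> f k = true.
Proof. intros H Hk. apply (proj1 (forallb_forall _ _) H), in_seq. lia. Qed.

Definition perm4_eqb (s t : perm4) : bool :=
  let '(a0, a1, a2, a3) := s in let '(b0, b1, b2, b3) := t in
  (a0 =? b0) && (a1 =? b1) && (a2 =? b2) && (a3 =? b3).

Lemma perm4_eqb_refl s : perm4_eqb s s = true.
Proof. destruct s as [[[a b] c] d]. cbn. rewrite !Nat.eqb_refl. reflexivity. Qed.

Lemma link_words_separated :
  forallb (fun k => forallb (fun l => (k =? l)
      || negb ((length (link_word k) =? length (link_word l))
               && perm4_eqb (perm_of (pos (link_word k)) perm_id) (perm_of (pos (link_word l)) perm_id)))
    (seq 0 13)) (seq 0 13) = true.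
Proof. vm_cast_no_check (eq_refl true). Qed.

Lemma nbr_inj A k l : k < 13 -> l < 13 -> veq (nbr A k) (nbr A l) -> k = l.
Proof.
  intros Hk Hl H. apply veq_cancel_l, veq_short in H as [H1 H2]; try apply link_word_length.
  pose proof (forallb_seq _ _ _ (forallb_seq _ _ _ link_words_separated Hk) Hl) as D.
  cbv beta in D. rewrite H1, H2, Nat.eqb_refl, perm4_eqb_refl, orb_false_r in D.
  apply Nat.eqb_eq, D.
Qed.

Lemma nbr0 A : veq (nbr A 0) A.
Proof. apply veq_geq. unfold nbr. cbn. rewrite app_nil_r. reflexivity. Qed.

(** * The star of a vertex *)

(* Link labels of the sixteen faces through a vertex A: the m-th list gives the
   three vertices of A f_m, f_m the m-th factorization, as neighbours of A. *)
Definition star_faces : list (list nat) :=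
  [[0;2;9];[0;3;11];[0;1;10];[0;4;8];[0;5;12];[0;6;9];[0;2;7];[0;1;11];
   [0;3;8];[0;4;10];[0;6;12];[0;5;7];[0;6;10];[0;1;7];[0;5;8];[0;3;9]].

Definition star_face (m : nat) : list nat := nth m star_faces [].

Definition is_star_face (A : word) (m : nat) (G : face) : Prop :=
  forall v, in_face v G <-> exists k, In k (star_face m) /\ veq v (nbr A k).

Definition memb (k : nat) (l : list nat) : bool := existsb (Nat.eqb k) l.

Lemma memb_In k l : memb k l = true <-> In k l.
Proof.
  unfold memb. rewrite existsb_exists. split.
  - intros [x [Hx E]]. apply Nat.eqb_eq in E as ->. exact Hx.
  - intro H. exists k. split; [exact H | apply Nat.eqb_refl].
Qed.

Definition same_set (l1 l2 : list nat) : bool :=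
  forallb (fun x => memb x l2) l1 && forallb (fun x => memb x l1) l2.

Lemma same_set_In l1 l2 : same_set l1 l2 = true -> forall x, In x l1 <-> In x l2.
Proof.
  unfold same_set. rewrite andb_true_iff, !forallb_forall.
  intros [H1 H2] x. split; intro Hx; apply memb_In; auto.
Qed.

Lemma star_faces_wf :
  forallb (fun m => (length (star_face m) =? 3) && memb 0 (star_face m)
                    && forallb (fun k => k <? 13) (star_face m)) (seq 0 16) = true.
Proof. vm_cast_no_check (eq_refl true). Qed.

Lemma star_face_length m : m < 16 -> length (star_face m) = 3.
Proof.
  intro Hm. pose proof (forallb_seq _ _ _ star_faces_wf Hm) as E. cbv beta in E.
  rewrite !andb_true_iff in E. apply Nat.eqb_eq, E.
Qed.

Lemma star_face_center m : m < 16 -> In 0 (star_face m).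
Proof.
  intro Hm. pose proof (forallb_seq _ _ _ star_faces_wf Hm) as E. cbv beta in E.
  rewrite !andb_true_iff in E. apply memb_In, E.
Qed.

Lemma star_face_lt m k : m < 16 -> In k (star_face m) -> k < 13.
Proof.
  intros Hm Hk. pose proof (forallb_seq _ _ _ star_faces_wf Hm) as E. cbv beta in E.
  rewrite !andb_true_iff, forallb_forall in E. apply Nat.ltb_lt, E, Hk.
Qed.

Definition fgens (f : gen * gen * gen) : list gen := let '(a1, a2, a3) := f in [a1; a2; a3].

Lemma in_face_iff v g f :
  in_face v (g, f) <-> exists j, j < 3 /\ veq v (g ++ pos (firstn j (fgens f))).
Proof.
  destruct f as [[a1 a2] a3]. unfold in_face, fv0, fv1, fv2. cbn. split.
  - intros [H|[H|H]]; [exists 0|exists 1|exists 2]; (split; [lia|]);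
      cbn; rewrite ?app_nil_r; exact H.
  - intros [[|[|[|j]]] [Hj H]]; cbn in H; try lia; rewrite ?app_nil_r in H; auto.
Qed.

Lemma lt3 j : j < 3 -> In j [0; 1; 2].
Proof. intro. destruct j as [|[|[|j]]]; cbn; auto; lia. Qed.

Lemma lt4 r : r < 4 -> In r [0; 1; 2; 3].
Proof. intro. destruct r as [|[|[|[|r]]]]; cbn; auto; lia. Qed.

Lemma In3 (l : list nat) k : length l = 3 -> In k l <-> exists j, j < 3 /\ nth j l 0 = k.
Proof.
  intro Hl. destruct l as [|x0 [|x1 [|x2 [|x3 l]]]]; cbn in Hl; try lia. cbn. split.
  - intros [<-|[<-|[<-|[]]]]; [exists 0|exists 1|exists 2]; cbn; split; auto; lia.
  - intros [[|[|[|j]]] [Hj <-]]; cbn; auto; lia.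
Qed.

Definition face_at (A : word) (m : nat) : face := (A, nth m factorizations (ga, ga, ga)).

Lemma face_at_face A m : m < 16 -> is_face (face_at A m).
Proof. intro. apply nth_In. cbn. lia. Qed.

Lemma star_faces_match :
  forallb (fun m => forallb (fun j =>
      coset_eqb (firstn j (fgens (nth m factorizations (ga, ga, ga))))
                (link_word (nth j (star_face m) 0))) [0; 1; 2]) (seq 0 16) = true.
Proof. vm_cast_no_check (eq_refl true). Qed.

Lemma face_at_star A m : m < 16 -> is_star_face A m (face_at A m).
Proof.
  intros Hm v. unfold face_at. rewrite in_face_iff.
  pose proof (proj1 (forallb_forall _ _) (forallb_seq _ _ _ star_faces_match Hm)) as E.
  assert (V : forall j, j < 3 -> veq (A ++ pos (firstn j (fgens (nth m factorizations (ga, ga, ga)))))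
                                     (nbr A (nth j (star_face m) 0)))
    by (intros j Hj; apply veq_pos, E, lt3, Hj).
  split.
  - intros [j [Hj Hv]]. exists (nth j (star_face m) 0).
    split; [apply nth_In; rewrite star_face_length; assumption|]. rewrite Hv. apply V, Hj.
  - intros [k [Hk Hv]]. apply (In3 _ _ (star_face_length m Hm)) in Hk as [j [Hj <-]].
    exists j. split; [exact Hj|]. rewrite Hv. symmetry. apply V, Hj.
Qed.

(* The word leading from the j-th to the i-th vertex of the face g f; when
   i < j it passes through g x, and x^-1 a x = xconj^3 a. *)
Definition face_path (f : gen * gen * gen) (j i : nat) : list gen :=
  if j <=? i then skipn j (firstn i (fgens f))
  else skipn j (fgens f) ++ xconj_pow 3 (firstn i (fgens f)).

Definition link_index (u : list gen) : nat :=
  match find (fun k => coset_eqb u (link_word k)) (seq 0 13) with Some k => k | None => 13 end.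

(* Seen from its j-th vertex, after conjugation by x^r, the face f has the
   link labels of some star face. *)
Definition face_in_star_from (f : gen * gen * gen) (j r : nat) : bool :=
  forallb (fun i => coset_eqb (xconj_pow r (face_path f j i))
                              (link_word (link_index (xconj_pow r (face_path f j i))))) [0; 1; 2]
  && existsb (fun m => same_set (map (fun i => link_index (xconj_pow r (face_path f j i))) [0; 1; 2])
                                (star_face m)) (seq 0 16).

Definition face_check (f : gen * gen * gen) : bool :=
  forallb (fun j =>
    forallb (fun i => coset_eqb (firstn j (fgens f) ++ face_path f j i) (firstn i (fgens f))) [0; 1; 2]
    && forallb (face_in_star_from f j) [0; 1; 2; 3]) [0; 1; 2].

Lemma face_check_all : forallb face_check factorizations = true.
Proof. vm_cast_no_check (eq_refl true). Qed.

Lemma faces_through A G : is_face G -> in_face A G -> exists m, m < 16 /\ is_star_face A m G.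
Proof.
  destruct G as [g f]. unfold is_face. cbn. intros Hf HA.
  apply in_face_iff in HA as [j [Hj HA]].
  apply veq_translate in HA as [r [Hr HA]].
  pose proof (proj1 (forallb_forall _ _) face_check_all f Hf) as E. unfold face_check in E.
  rewrite forallb_forall in E. specialize (E j (lt3 j Hj)). apply andb_true_iff in E as [E1 E2].
  rewrite forallb_forall in E1, E2. specialize (E2 r (lt4 r Hr)).
  apply andb_true_iff in E2 as [E2 E3]. rewrite forallb_forall in E2.
  apply existsb_exists in E3 as [m [Hm E3]]. apply in_seq in Hm.
  exists m. split; [lia|].
  set (lbl i := link_index (xconj_pow r (face_path f j i))) in *.
  assert (V : forall i, In i [0; 1; 2] -> veq (g ++ pos (firstn i (fgens f))) (nbr A (lbl i))).
  { intros i Hi. specialize (E1 i Hi). apply (veq_pos g) in E1.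
    rewrite pos_app, app_assoc in E1. rewrite <- E1, <- HA. apply veq_pos, E2, Hi. }
  intro v. rewrite in_face_iff. setoid_rewrite <- (same_set_In _ _ E3). split.
  - intros [i [Hi Hv]]. exists (lbl i). split.
    + apply (in_map lbl), lt3, Hi.
    + rewrite Hv. apply V, lt3, Hi.
  - intros [k [Hk Hv]]. apply in_map_iff in Hk as [i [<- Hi]].
    exists i. split; [destruct Hi as [<-|[<-|[<-|[]]]]; lia|].
    rewrite Hv. symmetry. apply V, Hi.
Qed.

Lemma in_face_veq v w G : veq v w -> in_face v G -> in_face w G.
Proof. intros E [H|[H|H]]; unfold in_face; rewrite <- E; auto. Qed.

Lemma star_face_mem A G m k : is_star_face A m G -> In k (star_face m) -> in_face (nbr A k) G.
Proof. intros V Hk. apply V. exists k. split; [exact Hk | reflexivity]. Qed.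

Lemma star_center_in A G m : m < 16 -> is_star_face A m G -> in_face A G.
Proof.
  intros Hm V. apply (in_face_veq (nbr A 0)); [apply nbr0|].
  apply (star_face_mem _ _ _ _ V), star_face_center, Hm.
Qed.

Lemma star_label_inj A m m' k k' : m < 16 -> m' < 16 -> In k (star_face m) -> In k' (star_face m') ->
  veq (nbr A k) (nbr A k') -> k = k'.
Proof.
  intros Hm Hm' Hk Hk' E.
  exact (nbr_inj A k k' (star_face_lt m k Hm Hk) (star_face_lt m' k' Hm' Hk') E).
Qed.

Lemma star_faces_distinct :
  forallb (fun m => forallb (fun m' =>
      (m =? m') || negb (forallb (fun k => memb k (star_face m')) (star_face m)))
    (seq 0 16)) (seq 0 16) = true.
Proof. vm_cast_no_check (eq_refl true). Qed.

Lemma is_star_face_unique A G m m' : m < 16 -> m' < 16 ->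
  is_star_face A m G -> is_star_face A m' G -> m = m'.
Proof.
  intros Hm Hm' V V'.
  assert (Sub : forallb (fun k => memb k (star_face m')) (star_face m) = true).
  { apply forallb_forall. intros k Hk. apply memb_In.
    destruct (proj1 (V' _) (star_face_mem _ _ _ _ V Hk)) as [k' [Hk' E]].
    rewrite (star_label_inj A m m' k k'); auto. }
  pose proof (forallb_seq _ _ _ (forallb_seq _ _ _ star_faces_distinct Hm) Hm') as D.
  cbv beta in D. rewrite Sub, orb_false_r in D. apply Nat.eqb_eq, D.
Qed.

Lemma star_face_feq A G H m : is_star_face A m G -> is_star_face A m H -> feq G H.
Proof. intros V W v. rewrite (V v), (W v). reflexivity. Qed.

Lemma is_star_face_feq A G H m : feq G H -> is_star_face A m G -> is_star_face A m H.
Proof. intros E V v. rewrite <- (E v). apply V. Qed.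

(** * Lozenges through A *)

(* The faces i and j of the star, glued along the edge from A to the neighbour b,
   which lies in no other face. *)
Definition star_lozenge (i j : nat) : bool :=
  negb (i =? j) && existsb (fun b => negb (b =? 0) && memb b (star_face j) &&
     forallb (fun m => negb (memb b (star_face m)) || (m =? i) || (m =? j)) (seq 0 16))
    (star_face i).

Lemma star_faces_meet_at_center :
  forallb (fun i => forallb (fun j => (i =? j) || forallb (fun a => forallb (fun b =>
     negb (memb a (star_face i) && memb a (star_face j) && memb b (star_face i)
           && memb b (star_face j) && negb (a =? b) && negb (a =? 0) && negb (b =? 0)))
    (seq 0 13)) (seq 0 13)) (seq 0 16)) (seq 0 16) = true.
Proof. vm_cast_no_check (eq_refl true). Qed.

Lemma star_common_edge i j a b : i < 16 -> j < 16 -> i <> j ->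
  In a (star_face i) -> In a (star_face j) -> In b (star_face i) -> In b (star_face j) ->
  a <> b -> a = 0 \/ b = 0.
Proof.
  intros Hi Hj Hij Ha1 Ha2 Hb1 Hb2 Hab.
  destruct (Nat.eq_dec a 0) as [|Ha]; auto. destruct (Nat.eq_dec b 0) as [|Hb]; auto. exfalso.
  pose proof (forallb_seq _ _ _ (forallb_seq _ _ _ star_faces_meet_at_center Hi) Hj) as E.
  cbv beta in E. apply Nat.eqb_neq in Hij. rewrite Hij, orb_false_l in E.
  pose proof (forallb_seq _ _ _ (forallb_seq _ _ _ E (star_face_lt _ _ Hi Ha1)) (star_face_lt _ _ Hi Hb1))
    as E'.
  cbv beta in E'. apply memb_In in Ha1, Ha2, Hb1, Hb2. apply Nat.eqb_neq in Hab, Ha, Hb.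
  rewrite Ha1, Ha2, Hb1, Hb2, Hab, Ha, Hb in E'. discriminate.
Qed.

Lemma star_lozenge_intro A F1 F2 i j b : i < 16 -> j < 16 -> i <> j ->
  is_star_face A i F1 -> is_star_face A j F2 -> b <> 0 -> In b (star_face i) -> In b (star_face j) ->
  (forall G, is_face G -> in_face A G -> in_face (nbr A b) G -> feq G F1 \/ feq G F2) ->
  star_lozenge i j = true.
Proof.
  intros Hi Hj Hij V1 V2 Hb Hbi Hbj Hall. unfold star_lozenge.
  apply andb_true_iff. split; [apply negb_true_iff, Nat.eqb_neq, Hij|].
  apply existsb_exists. exists b. split; [exact Hbi|].
  apply Nat.eqb_neq, negb_true_iff in Hb. apply memb_In in Hbj. rewrite Hb, Hbj.
  apply forallb_forall. intros m Hm. apply in_seq in Hm.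
  destruct (memb b (star_face m)) eqn:Eb; [apply memb_In in Eb|reflexivity].
  pose proof (face_at_star A m ltac:(lia)) as Vm.
  destruct (Hall (face_at A m)) as [E|E].
  - apply face_at_face. lia.
  - exact (star_center_in A _ m ltac:(lia) Vm).
  - exact (star_face_mem _ _ _ _ Vm Eb).
  - rewrite (is_star_face_unique A F1 m i ltac:(lia) Hi (is_star_face_feq _ _ _ _ E Vm) V1).
    rewrite Nat.eqb_refl. reflexivity.
  - rewrite (is_star_face_unique A F2 m j ltac:(lia) Hj (is_star_face_feq _ _ _ _ E Vm) V2).
    rewrite Nat.eqb_refl, orb_true_r. reflexivity.
Qed.

Lemma shared_label A F1 F2 i j p : i < 16 -> j < 16 -> is_star_face A i F1 -> is_star_face A j F2 ->
  in_face p F1 -> in_face p F2 ->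
  exists k, In k (star_face i) /\ In k (star_face j) /\ veq p (nbr A k).
Proof.
  intros Hi Hj V1 V2 H1 H2. apply V1 in H1 as [k [Hk E]]. apply V2 in H2 as [k' [Hk' E']].
  exists k. repeat split; auto.
  rewrite (star_label_inj A i j k k'); auto. rewrite <- E, <- E'. reflexivity.
Qed.

Lemma star_lozenge_of A F1 F2 i j : i < 16 -> j < 16 ->
  is_star_face A i F1 -> is_star_face A j F2 -> is_lozenge (F1, F2) -> star_lozenge i j = true.
Proof.
  intros Hi Hj V1 V2 (_ & _ & Hne & p & q & Hpq & Hp1 & Hq1 & Hp2 & Hq2 & Hall). cbn in *.
  assert (Hij : i <> j) by (intros ->; exact (Hne (star_face_feq A F1 F2 j V1 V2))).
  destruct (shared_label A F1 F2 i j p Hi Hj V1 V2 Hp1 Hp2) as [cp [Cp1 [Cp2 Ep]]].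
  destruct (shared_label A F1 F2 i j q Hi Hj V1 V2 Hq1 Hq2) as [cq [Cq1 [Cq2 Eq]]].
  assert (Hc : cp <> cq) by (intros <-; apply Hpq; rewrite Ep, Eq; reflexivity).
  assert (Edge : forall u v b, veq u (nbr A 0) -> veq v (nbr A b) ->
    (forall G, is_face G -> in_face u G -> in_face v G -> feq G F1 \/ feq G F2) ->
    forall G, is_face G -> in_face A G -> in_face (nbr A b) G -> feq G F1 \/ feq G F2).
  { intros u v b Eu Ev H G HG HA Hb. apply H; [exact HG| |].
    - apply (in_face_veq A); [rewrite Eu; symmetry; apply nbr0 | exact HA].
    - apply (in_face_veq (nbr A b)); [symmetry; exact Ev | exact Hb]. }
  destruct (star_common_edge i j cp cq Hi Hj Hij Cp1 Cp2 Cq1 Cq2 Hc) as [-> | ->].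
  - apply (star_lozenge_intro A F1 F2 i j cq); auto. exact (Edge p q cq Ep Eq Hall).
  - apply (star_lozenge_intro A F1 F2 i j cp); auto.
    apply (Edge q p cp Eq Ep). intros G HG H1 H2. apply Hall; auto.
Qed.

Lemma star_lozenge_is_lozenge A i j : i < 16 -> j < 16 -> star_lozenge i j = true ->
  is_lozenge (face_at A i, face_at A j).
Proof.
  intros Hi Hj L. unfold star_lozenge in L. apply andb_true_iff in L as [L1 L2].
  apply negb_true_iff, Nat.eqb_neq in L1.
  apply existsb_exists in L2 as [b [Hbi L2]]. rewrite !andb_true_iff in L2.
  destruct L2 as [[Hb Hbj] L3]. apply negb_true_iff, Nat.eqb_neq in Hb. apply memb_In in Hbj.
  pose proof (face_at_star A i Hi) as Vi. pose proof (face_at_star A j Hj) as Vj.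
  unfold is_lozenge; cbn [fst snd].
  split; [apply face_at_face, Hi|]. split; [apply face_at_face, Hj|].
  split; [intro E; exact (L1 (is_star_face_unique A _ i j Hi Hj (is_star_face_feq _ _ _ _ E Vi) Vj))|].
  exists (nbr A 0), (nbr A b). split.
  { intro E. apply Hb. symmetry. exact (star_label_inj A i i 0 b Hi Hi (star_face_center i Hi) Hbi E). }
  repeat split; try apply (star_face_mem _ _ _ _ Vi); try apply (star_face_mem _ _ _ _ Vj);
    auto using star_face_center.
  intros G HG H0 H2.
  destruct (faces_through A G HG (in_face_veq _ _ _ (nbr0 A) H0)) as [m [Hm V]].
  destruct (proj1 (V _) H2) as [k [Hk E]].
  assert (k = b) as -> by (symmetry; exact (star_label_inj A j m b k Hj Hm Hbj Hk E)).
  pose proof (forallb_seq _ _ _ L3 Hm) as Em. cbv beta in Em.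
  apply memb_In in Hk. rewrite Hk, orb_false_l, orb_true_iff, !Nat.eqb_eq in Em.
  destruct Em as [-> | ->]; [left|right]; apply (star_face_feq A _ _ _ V); assumption.
Qed.

Definition star_meet (i j a b : nat) : bool :=
  forallb (fun k => negb (memb k (star_face i ++ star_face j) && memb k (star_face a ++ star_face b))
                    || (k =? 0)) (seq 0 13).

Lemma lozenge_label A F1 F2 i j v : i < 16 -> j < 16 -> is_star_face A i F1 -> is_star_face A j F2 ->
  in_loz v (F1, F2) -> exists k, In k (star_face i ++ star_face j) /\ k < 13 /\ veq v (nbr A k).
Proof.
  intros Hi Hj V1 V2 [H|H]; [apply V1 in H as [k [Hk E]] | apply V2 in H as [k [Hk E]]];
    exists k; rewrite in_app_iff; eauto using star_face_lt.
Qed.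

Lemma star_meet_exactly A F1 F2 G1 G2 i j a b : i < 16 -> j < 16 -> a < 16 -> b < 16 ->
  is_star_face A i F1 -> is_star_face A j F2 -> is_star_face A a G1 -> is_star_face A b G2 ->
  star_meet i j a b = true -> meet_exactly (F1, F2) (G1, G2) A.
Proof.
  intros Hi Hj Ha Hb V1 V2 W1 W2 M. split; [|split].
  - left. exact (star_center_in A F1 i Hi V1).
  - left. exact (star_center_in A G1 a Ha W1).
  - intros v H1 H2.
    destruct (lozenge_label A F1 F2 i j v Hi Hj V1 V2 H1) as [k [Hk [Hk13 E]]].
    destruct (lozenge_label A G1 G2 a b v Ha Hb W1 W2 H2) as [k' [Hk' [Hk13' E']]].
    assert (k = k') as <- by (apply (nbr_inj A); auto; rewrite <- E, <- E'; reflexivity).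
    pose proof (forallb_seq _ _ _ M Hk13) as Mk. cbv beta in Mk.
    apply memb_In in Hk, Hk'. rewrite Hk, Hk', orb_false_l, Nat.eqb_eq in Mk. subst k.
    rewrite E. apply nbr0.
Qed.

Lemma star_meet_of A F1 F2 G1 G2 i j a b :
  is_star_face A i F1 -> is_star_face A j F2 -> is_star_face A a G1 -> is_star_face A b G2 ->
  meet_exactly (F1, F2) (G1, G2) A -> star_meet i j a b = true.
Proof.
  intros V1 V2 W1 W2 [_ [_ M]]. apply forallb_forall. intros k Hk. apply in_seq in Hk.
  destruct (memb k (star_face i ++ star_face j)) eqn:E1; [|reflexivity].
  destruct (memb k (star_face a ++ star_face b)) eqn:E2; [|reflexivity].
  apply memb_In, in_app_iff in E1, E2. cbn. apply Nat.eqb_eq, (nbr_inj A); [lia | lia |].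
  rewrite nbr0. apply M.
  - destruct E1 as [E1|E1]; [left | right]; eapply star_face_mem; eassumption.
  - destruct E2 as [E2|E2]; [left | right]; eapply star_face_mem; eassumption.
Qed.

Lemma meet_exactly_swap R G1 G2 A : meet_exactly R (G1, G2) A -> meet_exactly R (G2, G1) A.
Proof.
  unfold meet_exactly, in_loz. cbn. intros (HR & HG & M). repeat split; [exact HR|tauto|].
  intros v Hv HvG. apply M; tauto.
Qed.

(** * Flat hexagons centred at A *)

Definition link_adjacent (x y : nat) : bool :=
  existsb (fun m => memb x (star_face m) && memb y (star_face m)) (seq 0 16).

(* A flat hexagon centred at A is described by the link labels c_0, ..., c_5
   of its outer vertices: distinct neighbours of A, cyclically adjacent. *)
Definition hex_cycle (c : list nat) : bool :=
  forallb (fun k => (1 <=? nth k c 0) && (nth k c 0 <? 13)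
      && link_adjacent (nth k c 0) (nth ((k + 1) mod 6) c 0)
      && forallb (fun k' => (k =? k') || negb (nth k c 0 =? nth k' c 0)) (seq 0 6)) (seq 0 6).

Lemma hex_cycle_spec c : hex_cycle c = true <->
  forall k, k < 6 -> 1 <= nth k c 0 < 13 /\ link_adjacent (nth k c 0) (nth ((k + 1) mod 6) c 0) = true
    /\ forall k', k' < 6 -> k <> k' -> nth k c 0 <> nth k' c 0.
Proof.
  unfold hex_cycle. rewrite forallb_forall. setoid_rewrite in_seq.
  split; intros H k Hk; specialize (H k ltac:(lia)); rewrite !andb_true_iff, Nat.leb_le, Nat.ltb_lt,
    forallb_forall in *.
  - destruct H as [[[H1 H2] H3] H4]. repeat split; auto.
    intros k' Hk' Hne E. specialize (H4 k' ltac:(apply in_seq; lia)).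
    apply Nat.eqb_neq in Hne. rewrite Hne, E, Nat.eqb_refl in H4. discriminate.
  - destruct H as [H1 [H2 H3]]. repeat split; try lia; auto.
    intros k' Hk'. apply in_seq in Hk'. destruct (Nat.eq_dec k k') as [<-|Hne].
    + rewrite Nat.eqb_refl. reflexivity.
    + apply orb_true_iff. right. apply negb_true_iff, Nat.eqb_neq, H3; lia.
Qed.

Definition covers (m : nat) (c : list nat) : bool :=
  existsb (fun k => same_set (star_face m) [0; nth k c 0; nth ((k + 1) mod 6) c 0]) (seq 0 6).

Definition hexagon_at (A : word) (c : list nat) : hexagon := (A, fun k => nbr A (nth k c 0)).

Lemma star_face_hex_face A G m x y : is_star_face A m G -> same_set (star_face m) [0; x; y] = true ->
  forall w, in_face w G <-> veq w A \/ veq w (nbr A x) \/ veq w (nbr A y).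
Proof.
  intros V S w. pose proof (same_set_In _ _ S) as S'. rewrite (V w). setoid_rewrite S'. cbn.
  split.
  - intros [k [[<-|[<-|[<-|[]]]] E]]; [left; rewrite E; apply nbr0 | right; left | right; right]; exact E.
  - intros [E|[E|E]]; [exists 0 | exists x | exists y]; split; auto.
    rewrite E. symmetry. apply nbr0.
Qed.

Lemma covers_face_in_hex A c F m : covers m c = true -> is_star_face A m F ->
  face_in_hex F (hexagon_at A c).
Proof.
  intros Hc V. apply existsb_exists in Hc as [k [Hk Hc]]. apply in_seq in Hk.
  exists k. split; [lia|]. exact (star_face_hex_face A F m _ _ V Hc).
Qed.

Lemma star_faces_by_edge :
  forallb (fun m => forallb (fun x => forallb (fun y =>
    negb (memb x (star_face m) && memb y (star_face m) && negb (x =? 0) && negb (y =? 0)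
          && negb (x =? y)) || same_set (star_face m) [0; x; y]) (seq 0 13)) (seq 0 13)) (seq 0 16) = true.
Proof. vm_cast_no_check (eq_refl true). Qed.

Lemma star_face_by_edge m x y : m < 16 -> x < 13 -> y < 13 -> In x (star_face m) -> In y (star_face m) ->
  x <> 0 -> y <> 0 -> x <> y -> same_set (star_face m) [0; x; y] = true.
Proof.
  intros Hm Hx Hy Ix Iy X0 Y0 XY.
  pose proof (forallb_seq _ _ _ (forallb_seq _ _ _ (forallb_seq _ _ _ star_faces_by_edge Hm) Hx) Hy)
    as E.
  cbv beta in E. apply memb_In in Ix, Iy. apply Nat.eqb_neq in X0, Y0, XY.
  rewrite Ix, Iy, X0, Y0, XY in E. exact E.
Qed.

Lemma succ_mod6 k : k < 6 -> (k + 1) mod 6 < 6 /\ (k + 1) mod 6 <> k.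
Proof. intro. destruct k as [|[|[|[|[|[|k]]]]]]; cbn; lia. Qed.

Lemma hex_cycle_flat A c : hex_cycle c = true -> is_flat_hexagon (hexagon_at A c).
Proof.
  rewrite hex_cycle_spec. intro H. unfold is_flat_hexagon, hexagon_at. cbn [fst snd].
  split; [|split].
  - intros k Hk E. destruct (H k Hk) as [Hn _].
    assert (nth k c 0 = 0) by (apply (nbr_inj A); try lia; rewrite E; symmetry; apply nbr0). lia.
  - intros k k' Hkk Hk' E. destruct (H k ltac:(lia)) as [Hn [_ Hd]]. destruct (H k' Hk') as [Hn' _].
    apply (Hd k' Hk'); [lia|]. apply (nbr_inj A); [lia | lia | exact E].
  - intros k Hk. destruct (H k Hk) as [Hn [Ha Hd]].
    destruct (succ_mod6 k Hk) as [Hk1 Hk2]. destruct (H _ Hk1) as [Hn1 _].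
    apply existsb_exists in Ha as [m [Hm Ha]]. apply in_seq in Hm.
    apply andb_true_iff in Ha as [Ha1 Ha2]. apply memb_In in Ha1, Ha2.
    exists (face_at A m). split; [apply face_at_face; lia|].
    unfold hex_face. cbn [fst snd]. apply (star_face_hex_face A _ m); [apply face_at_star; lia|].
    apply star_face_by_edge; try lia; try assumption.
    apply Hd; [exact Hk1 | intros E; apply Hk2; symmetry; exact E].
Qed.

Definition link_next (l : nat) : list nat := filter (link_adjacent l) (seq 1 12).

Definition walks : list (list nat) :=
  flat_map (fun l0 => flat_map (fun l1 => flat_map (fun l2 => flat_map (fun l3 =>
  flat_map (fun l4 => map (fun l5 => [l0; l1; l2; l3; l4; l5])
    (link_next l4)) (link_next l3)) (link_next l2)) (link_next l1)) (link_next l0)) (seq 1 12).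

Lemma hex_cycle_in_walks c : hex_cycle c = true -> length c = 6 -> In c walks.
Proof.
  rewrite hex_cycle_spec. intros H Hc.
  destruct c as [|l0 [|l1 [|l2 [|l3 [|l4 [|l5 [|? ?]]]]]]]; cbn in Hc; try lia.
  assert (N : forall k, k < 6 -> In (nth k [l0; l1; l2; l3; l4; l5] 0) (seq 1 12))
    by (intros k Hk; apply in_seq; specialize (H k Hk); lia).
  assert (Nx : forall k, k < 5 -> In (nth (S k) [l0; l1; l2; l3; l4; l5] 0)
                                    (link_next (nth k [l0; l1; l2; l3; l4; l5] 0))).
  { intros k Hk. apply filter_In. split; [apply N; lia|].
    destruct (H k ltac:(lia)) as [_ [Ha _]]. replace (S k) with ((k + 1) mod 6); [exact Ha|].
    destruct k as [|[|[|[|[|k]]]]]; cbn; lia. }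
  unfold walks. apply in_flat_map. exists l0. split; [exact (N 0 ltac:(lia))|].
  apply in_flat_map. exists l1. split; [exact (Nx 0 ltac:(lia))|].
  apply in_flat_map. exists l2. split; [exact (Nx 1 ltac:(lia))|].
  apply in_flat_map. exists l3. split; [exact (Nx 2 ltac:(lia))|].
  apply in_flat_map. exists l4. split; [exact (Nx 3 ltac:(lia))|].
  apply in_map_iff. exists l5. split; [reflexivity | exact (Nx 4 ltac:(lia))].
Qed.

(* Written with [if] rather than [&&] so that the call-by-value [vm_compute]
   short-circuits; the same holds below. *)
Definition star_hex (i j a b : nat) : bool :=
  existsb (fun c => if covers i c && covers j c && covers a c && covers b c then hex_cycle c else false)
    walks.

Lemma star_hex_sound A F1 F2 G1 G2 i j a b :
  is_star_face A i F1 -> is_star_face A j F2 -> is_star_face A a G1 -> is_star_face A b G2 ->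
  star_hex i j a b = true ->
  exists H, is_flat_hexagon H /\ loz_in_hex (F1, F2) H /\ loz_in_hex (G1, G2) H.
Proof.
  intros V1 V2 W1 W2 X. apply existsb_exists in X as [c [_ X]].
  destruct (covers i c && covers j c && covers a c && covers b c) eqn:C; [|discriminate].
  rewrite !andb_true_iff in C. destruct C as [[[C1 C2] C3] C4]. exists (hexagon_at A c).
  split; [exact (hex_cycle_flat A c X)|].
  split; split; cbn [fst snd].
  - exact (covers_face_in_hex A c F1 i C1 V1).
  - exact (covers_face_in_hex A c F2 j C2 V2).
  - exact (covers_face_in_hex A c G1 a C3 W1).
  - exact (covers_face_in_hex A c G2 b C4 W2).
Qed.

Section HexagonAtA.

Variables (A : word) (H : hexagon).
Hypotheses (Hflat : is_flat_hexagon H) (Hcentre : veq (fst H) A).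

Lemma hex_star_face k : k < 6 -> exists G m, m < 16 /\ is_star_face A m G /\ hex_face H k G.
Proof.
  intro Hk. destruct Hflat as [_ [_ F]]. destruct (F k Hk) as [G [HG HH]].
  assert (HA : in_face A G) by (apply (in_face_veq (fst H)); [exact Hcentre | apply HH; left; reflexivity]).
  destruct (faces_through A G HG HA) as [m [Hm V]]. exists G, m. auto.
Qed.

Lemma hex_vertex_label k : k < 6 -> exists l, 1 <= l < 13 /\ veq (snd H k) (nbr A l).
Proof.
  intro Hk. destruct (hex_star_face k Hk) as [G [m [Hm [V HH]]]].
  destruct (proj1 (V _) (proj2 (HH _) (or_intror (or_introl (reflexivity _))))) as [l [Hl E]].
  exists l. split; [|exact E]. pose proof (star_face_lt m l Hm Hl).
  destruct l; [|lia]. exfalso. apply (proj1 Hflat k Hk). rewrite E, nbr0. symmetry. exact Hcentre.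
Qed.

Variable c : list nat.
Hypothesis Hlabels : forall k, k < 6 -> 1 <= nth k c 0 < 13 /\ veq (snd H k) (nbr A (nth k c 0)).

Lemma hex_labels_cycle : hex_cycle c = true.
Proof.
  apply hex_cycle_spec. intros k Hk. destruct (Hlabels k Hk) as [Nk Ek].
  split; [exact Nk|]. split.
  - destruct (succ_mod6 k Hk) as [Hk1 _]. destruct (Hlabels _ Hk1) as [Nk1 Ek1].
    destruct (hex_star_face k Hk) as [G [m [Hm [V HH]]]].
    assert (Lbl : forall k' , k' < 6 -> veq (snd H k') (nbr A (nth k' c 0)) -> 1 <= nth k' c 0 < 13 ->
              in_face (snd H k') G -> In (nth k' c 0) (star_face m)).
    { intros k' _ E' N' Hin. destruct (proj1 (V _) Hin) as [x [Hx Ex]].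
      replace (nth k' c 0) with x; [exact Hx|].
      apply (nbr_inj A); [exact (star_face_lt m x Hm Hx) | lia | rewrite <- Ex; exact E']. }
    apply existsb_exists. exists m. split; [apply in_seq; lia|].
    apply andb_true_iff. split; apply memb_In.
    + apply Lbl; auto. apply HH. right; left; reflexivity.
    + apply Lbl; auto. apply HH. right; right; reflexivity.
  - intros k' Hk' Hne E. destruct (Hlabels k' Hk') as [_ Ek'].
    assert (Evv : veq (snd H k) (snd H k')) by (rewrite Ek, E, <- Ek'; reflexivity).
    destruct Hflat as [_ [Fd _]]. destruct (Nat.lt_ge_cases k k').
    + exact (Fd k k' ltac:(lia) Hk' Evv).
    + apply (Fd k' k); [lia | exact Hk | symmetry; exact Evv].
Qed.

Lemma hex_covers F m : m < 16 -> is_star_face A m F -> face_in_hex F H -> covers m c = true.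
Proof.
  intros Hm V [k [Hk HH]]. apply existsb_exists. exists k. split; [apply in_seq; lia|].
  destruct (succ_mod6 k Hk) as [Hk1 _].
  destruct (Hlabels k Hk) as [N1 E1]. destruct (Hlabels _ Hk1) as [N2 E2].
  assert (Lbl : forall v l, l < 13 -> veq v (nbr A l) -> in_face v F -> In l (star_face m)).
  { intros v l Hl Ev Hvf. destruct (proj1 (V v) Hvf) as [l' [Hl' E']].
    replace l with l'; [exact Hl'|].
    apply (nbr_inj A); [exact (star_face_lt m l' Hm Hl') | exact Hl | rewrite <- E'; exact Ev]. }
  apply andb_true_intro. split; apply forallb_forall; intros x Hx; apply memb_In.
  - pose proof (star_face_lt m x Hm Hx).
    destruct (proj1 (HH _) (star_face_mem _ _ _ _ V Hx)) as [E|[E|E]].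
    + left. apply (nbr_inj A); [lia | lia |]. rewrite E, Hcentre. apply nbr0.
    + right; left. apply (nbr_inj A); [lia | lia |]. rewrite <- E1, E. reflexivity.
    + right; right; left. apply (nbr_inj A); [lia | lia |]. rewrite <- E2, E. reflexivity.
  - destruct Hx as [<-|[<-|[<-|[]]]].
    + apply star_face_center, Hm.
    + apply (Lbl (snd H k)); [lia | exact E1 | apply HH; right; left; reflexivity].
    + apply (Lbl (snd H ((k + 1) mod 6))); [lia | exact E2 | apply HH; right; right; reflexivity].
Qed.

End HexagonAtA.

Lemma star_hex_of A H F1 F2 G1 G2 i j a b : is_flat_hexagon H -> veq (fst H) A ->
  i < 16 -> j < 16 -> a < 16 -> b < 16 ->
  is_star_face A i F1 -> is_star_face A j F2 -> is_star_face A a G1 -> is_star_face A b G2 ->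
  face_in_hex F1 H -> face_in_hex F2 H -> face_in_hex G1 H -> face_in_hex G2 H ->
  star_hex i j a b = true.
Proof.
  intros Hf Hc Hi Hj Ha Hb V1 V2 W1 W2 I1 I2 I3 I4.
  destruct (hex_vertex_label A H Hf Hc 0 ltac:(lia)) as [l0 L0].
  destruct (hex_vertex_label A H Hf Hc 1 ltac:(lia)) as [l1 L1].
  destruct (hex_vertex_label A H Hf Hc 2 ltac:(lia)) as [l2 L2].
  destruct (hex_vertex_label A H Hf Hc 3 ltac:(lia)) as [l3 L3].
  destruct (hex_vertex_label A H Hf Hc 4 ltac:(lia)) as [l4 L4].
  destruct (hex_vertex_label A H Hf Hc 5 ltac:(lia)) as [l5 L5].
  set (c := [l0; l1; l2; l3; l4; l5]).
  assert (Hv : forall k, k < 6 -> 1 <= nth k c 0 < 13 /\ veq (snd H k) (nbr A (nth k c 0)))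
    by (intros [|[|[|[|[|[|k]]]]]] Hk; cbn; auto; lia).
  pose proof (hex_labels_cycle A H Hf Hc c Hv) as Hcyc.
  apply existsb_exists. exists c. split; [exact (hex_cycle_in_walks c Hcyc eq_refl)|].
  rewrite Hcyc, (hex_covers A H Hc c Hv F1 i), (hex_covers A H Hc c Hv F2 j),
    (hex_covers A H Hc c Hv G1 a), (hex_covers A H Hc c Hv G2 b) by assumption.
  reflexivity.
Qed.

(** * The two partners *)

Lemma lozenge_star R A : is_lozenge R -> wide_vertex R A ->
  exists i j, i < 16 /\ j < 16 /\ is_star_face A i (fst R) /\ is_star_face A j (snd R)
              /\ star_lozenge i j = true.
Proof.
  intros HR [HA1 HA2]. pose proof HR as (Hf1 & Hf2 & _).
  destruct (faces_through A _ Hf1 HA1) as [i [Hi V1]].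
  destruct (faces_through A _ Hf2 HA2) as [j [Hj V2]].
  exists i, j. do 4 (split; [assumption|]).
  destruct R. exact (star_lozenge_of A _ _ i j Hi Hj V1 V2 HR).
Qed.

Lemma is_lozenge_swap G1 G2 : is_lozenge (G1, G2) -> is_lozenge (G2, G1).
Proof.
  unfold is_lozenge. cbn.
  intros (H1 & H2 & Hne & p & q & Hpq & Hp1 & Hq1 & Hp2 & Hq2 & Hall).
  repeat split; auto.
  - intro E. apply Hne. intro v. symmetry. apply E.
  - exists p, q. repeat split; auto. intros G HG Hp Hq. apply or_comm, Hall; auto.
Qed.

Lemma hex_partner_swap R A G1 G2 : hex_partner R A (G1, G2) -> hex_partner R A (G2, G1).
Proof.
  intros [M [H [Hf [HR [I1 I2]]]]].
  split; [exact (meet_exactly_swap _ _ _ _ M)|]. exists H. exact (conj Hf (conj HR (conj I2 I1))).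
Qed.

Lemma hex_partner_hexagon R A R' : hex_partner R A R' ->
  exists H, is_flat_hexagon H /\ veq (fst H) A /\ loz_in_hex R H /\ loz_in_hex R' H.
Proof.
  intros [[_ [_ M]] [H [Hf [IR IR']]]]. exists H. split; [exact Hf|]. split; [|exact (conj IR IR')].
  assert (Centre : forall F, face_in_hex F H -> in_face (fst H) F)
    by (intros F [k [_ E]]; apply E; left; reflexivity).
  (* the centre of the hexagon is a common vertex of R and R', hence is A *)
  apply M; left; apply Centre; [apply IR | apply IR'].
Qed.

Lemma hex_partner_wide R A R' : hex_partner R A R' -> wide_vertex R' A.
Proof.
  intros X. destruct (hex_partner_hexagon R A R' X) as (H & _ & Hc & _ & [[k1 [_ E1]] [k2 [_ E2]]]).
  split; apply (in_face_veq (fst H)); [exact Hc | apply E1 | exact Hc | apply E2]; left; reflexivity.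
Qed.

Definition partner_pair (i j a b : nat) : bool :=
  if star_lozenge a b && star_meet i j a b then star_hex i j a b else false.

Section PartnersOfLozenge.

Variables (A : word) (F1 F2 : face) (i j : nat).
Hypotheses (Hi : i < 16) (Hj : j < 16) (V1 : is_star_face A i F1) (V2 : is_star_face A j F2).

Lemma face_at_partner a b : a < 16 -> b < 16 -> partner_pair i j a b = true ->
  is_lozenge (face_at A a, face_at A b) /\ hex_partner (F1, F2) A (face_at A a, face_at A b).
Proof.
  intros Ha Hb P. unfold partner_pair in P.
  destruct (star_lozenge a b && star_meet i j a b) eqn:LM; [|discriminate].
  apply andb_true_iff in LM as [L M]. rename P into X.
  pose proof (face_at_star A a Ha) as W1. pose proof (face_at_star A b Hb) as W2.
  split; [exact (star_lozenge_is_lozenge A a b Ha Hb L)|].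
  split; [exact (star_meet_exactly A _ _ _ _ i j a b Hi Hj Ha Hb V1 V2 W1 W2 M)|].
  exact (star_hex_sound A _ _ _ _ i j a b V1 V2 W1 W2 X).
Qed.

Lemma partner_pair_of G1 G2 a b : a < 16 -> b < 16 -> is_star_face A a G1 -> is_star_face A b G2 ->
  is_lozenge (G1, G2) -> hex_partner (F1, F2) A (G1, G2) -> partner_pair i j a b = true.
Proof.
  intros Ha Hb W1 W2 L X. pose proof X as [M _].
  destruct (hex_partner_hexagon _ _ _ X) as (H & Hf & Hc & [I1 I2] & [I3 I4]).
  unfold partner_pair. rewrite (star_lozenge_of A G1 G2 a b), (star_meet_of A F1 F2 G1 G2 i j a b),
    (star_hex_of A H F1 F2 G1 G2 i j a b); auto.
Qed.

End PartnersOfLozenge.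

Definition partner_pairs (i j : nat) : list (nat * nat) :=
  filter (fun p => if fst p <? snd p then partner_pair i j (fst p) (snd p) else false)
    (list_prod (seq 0 16) (seq 0 16)).

Lemma partner_pairs_In i j a b :
  In (a, b) (partner_pairs i j) <-> (a < 16 /\ b < 16) /\ a < b /\ partner_pair i j a b = true.
Proof.
  unfold partner_pairs. rewrite filter_In, in_prod_iff, !in_seq. cbn [fst snd].
  destruct (a <? b) eqn:E; [apply Nat.ltb_lt in E | apply Nat.ltb_ge in E]; split.
  - intros [[Ha Hb] P]. repeat split; auto; lia.
  - intros [[Ha Hb] [_ P]]. repeat split; auto; lia.
  - intros [_ P]. discriminate.
  - intros [_ [Hab _]]. lia.
Qed.

Definition two_distinct_pairs (l : list (nat * nat)) : bool :=
  match l with [p; q] => negb ((fst p =? fst q) && (snd p =? snd q)) | _ => false end.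

Lemma exactly_two_partners :
  forallb (fun i => forallb (fun j =>
      if star_lozenge i j then two_distinct_pairs (partner_pairs i j) else true)
    (seq 0 16)) (seq 0 16) = true.
Proof. vm_cast_no_check (eq_refl true). Qed.

Lemma partner_pairs_two i j : i < 16 -> j < 16 -> star_lozenge i j = true ->
  exists p q, partner_pairs i j = [p; q] /\ p <> q.
Proof.
  intros Hi Hj L.
  pose proof (forallb_seq _ _ _ (forallb_seq _ _ _ exactly_two_partners Hi) Hj) as E.
  cbv beta in E. rewrite L in E.
  destruct (partner_pairs i j) as [|[a b] [|[c d] [|]]]; try discriminate.
  exists (a, b), (c, d). split; [reflexivity|]. intros Eq. injection Eq as <- <-.
  cbn in E. rewrite !Nat.eqb_refl in E. discriminate.
Qed.

Lemma face_at_leq_inj A a1 b1 a2 b2 : a1 < 16 -> b1 < 16 -> a2 < 16 -> b2 < 16 -> a1 < b1 -> a2 < b2 ->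
  leq (face_at A a1, face_at A b1) (face_at A a2, face_at A b2) -> (a1, b1) = (a2, b2).
Proof.
  assert (U : forall a b, a < 16 -> b < 16 -> feq (face_at A a) (face_at A b) -> a = b).
  { intros a b Ha Hb E. apply (is_star_face_unique A (face_at A b) a b Ha Hb).
    - exact (is_star_face_feq A _ _ a E (face_at_star A a Ha)).
    - exact (face_at_star A b Hb). }
  intros Ha1 Hb1 Ha2 Hb2 H1 H2 [[E1 E2]|[E1 E2]]; cbn in E1, E2.
  - rewrite (U a1 a2), (U b1 b2); auto.
  - pose proof (U a1 b2 Ha1 Hb2 E1). pose proof (U b1 a2 Hb1 Ha2 E2). lia.
Qed.

Lemma hex_partner_in_pairs A F1 F2 i j R' : i < 16 -> j < 16 ->
  is_star_face A i F1 -> is_star_face A j F2 -> is_lozenge R' -> hex_partner (F1, F2) A R' ->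
  exists p, In p (partner_pairs i j) /\ leq R' (face_at A (fst p), face_at A (snd p)).
Proof.
  intros Hi Hj V1 V2 L X.
  destruct (lozenge_star R' A L (hex_partner_wide _ _ _ X)) as (a & b & Ha & Hb & W1 & W2 & Lab).
  destruct R' as [G1 G2]. cbn in W1, W2.
  pose proof (face_at_star A a Ha). pose proof (face_at_star A b Hb).
  destruct (Nat.lt_total a b) as [Hab|[<-|Hab]].
  - exists (a, b). split.
    + apply partner_pairs_In. repeat split; auto.
      exact (partner_pair_of A F1 F2 i j Hi Hj V1 V2 G1 G2 a b Ha Hb W1 W2 L X).
    + left. split; cbn; eapply star_face_feq; eassumption.
  - unfold star_lozenge in Lab. rewrite Nat.eqb_refl in Lab. discriminate.
  - exists (b, a). split.
    + apply partner_pairs_In. repeat split; auto.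
      exact (partner_pair_of A F1 F2 i j Hi Hj V1 V2 G2 G1 b a Hb Ha W2 W1
               (is_lozenge_swap _ _ L) (hex_partner_swap _ _ _ _ X)).
    + right. split; cbn; eapply star_face_feq; eassumption.
Qed.

Theorem lemma12 (R : lozenge) (A : word) :
  is_lozenge R -> wide_vertex R A ->
  exists R1 R2 : lozenge,
    is_lozenge R1 /\ is_lozenge R2 /\ ~ leq R1 R2 /\
    hex_partner R A R1 /\ hex_partner R A R2 /\
    (forall R' : lozenge, is_lozenge R' -> hex_partner R A R' ->
       leq R' R1 \/ leq R' R2).
Proof.
  intros HR HA.
  destruct (lozenge_star R A HR HA) as (i & j & Hi & Hj & V1 & V2 & Lij).
  destruct (partner_pairs_two i j Hi Hj Lij) as ([a1 b1] & [a2 b2] & Hpairs & Hne).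
  assert (P1 : In (a1, b1) (partner_pairs i j)) by (rewrite Hpairs; left; reflexivity).
  assert (P2 : In (a2, b2) (partner_pairs i j)) by (rewrite Hpairs; right; left; reflexivity).
  apply partner_pairs_In in P1 as ([Ha1 Hb1] & Hab1 & P1).
  apply partner_pairs_In in P2 as ([Ha2 Hb2] & Hab2 & P2).
  destruct R as [F1 F2]. cbn in V1, V2.
  destruct (face_at_partner A F1 F2 i j Hi Hj V1 V2 a1 b1 Ha1 Hb1 P1) as [L1 X1].
  destruct (face_at_partner A F1 F2 i j Hi Hj V1 V2 a2 b2 Ha2 Hb2 P2) as [L2 X2].
  exists (face_at A a1, face_at A b1), (face_at A a2, face_at A b2).
  refine (conj L1 (conj L2 (conj _ (conj X1 (conj X2 _))))).
  - intro E. exact (Hne (face_at_leq_inj A a1 b1 a2 b2 Ha1 Hb1 Ha2 Hb2 Hab1 Hab2 E)).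
  - intros R' L X. destruct (hex_partner_in_pairs A F1 F2 i j R' Hi Hj V1 V2 L X) as [p [Hp E]].
    rewrite Hpairs in Hp. destruct Hp as [<-|[<-|[]]]; [left|right]; exact E.
Qed.
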